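(* Let $k\ge 2$, let $\lambda_1,\ldots,\lambda_k$ be nonzero integers with $\gcd(\lambda_1,\ldots,\lambda_k)=1$, $g_i=\gcd(\lambda_j:j\ne i)$, and $p=\prod_{i=1}^k g_i$. Let $A\subset\mathbb{Z}$ be finite. For each $1\le i\le k$ write $A=\bigcup_{j=1}^{m_i}A_{ij}$ (disjoint) where the $A_{ij}$ are the nonempty intersections of $A$ with residue classes mod $g_i$, $A_{ij}=a_{ij}+g_i\cdot A'_{ij}$ with $0\le a_{ij}<g_i$. Similarly write $A=\bigcup_{e=1}^m P_e$ (disjoint) where the $P_e$ are the nonempty intersections of $A$ with residue classes mod $p$, $P_e=p_e+p\cdot P'_e$ with $0\le p_e<p$. For fixed $e$ and each $i$, let $e_i\in\{1,\dots,m_i\}$ be the index with $p_e\equiv a_{ie_i}\pmod{g_i}$ (so $P_e=\bigcap_i A_{ie_i}$). Suppose that $A'_{ie_i}$ is fully distributed mod $g_i$ for every $1\le i\le k$. Then either $P'_e$ is fully distributed mod $g_i$ for every $1\le i\le k$, or $$|\lambda_1\cdot A_{1e_1}+\cdots+\lambda_k\cdot A_{ke_k}|\ \ge\ |\lambda_1\cdot P_e+\cdots+\lambda_k\cdot P_e|+|P_e|.$$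
   Context: For an integer $d$ and a finite set $A$, $d\cdot A=\{da:a\in A\}$, $x+A=\{x+a:a\in A\}$; sums of sets are Minkowski sums. A set $A\subset\mathbb{Z}$ is fully distributed (FD) mod $q$ if it intersects every residue class mod $q$. The $g_i$ are pairwise coprime. *)

(* integers via ssrint/intdiv; finite sets of integers as
   sequences (duplicates irrelevant; cardinality = size of undup). *)
From HB Require Import structures.
From mathcomp Require Import all_boot all_order all_algebra.
Set Implicit Arguments. Unset Strict Implicit. Unset Printing Implicit Defensive.
Import Order.TTheory GRing.Theory Num.Theory.
Local Open Scope ring_scope.

Definition cardZ (S : seq int) : nat := size (undup S).

Definition dil (d : int) (A : seq int) : seq int := [seq d * a | a <- A].

Definition sumset (A B : seq int) : seq int := [seq a + b | a <- A, b <- B].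

Definition bigsum (k : nat) (F : 'I_k -> seq int) : seq int :=
  \big[sumset/[:: 0]]_(i < k) F i.

Definition FD (q : int) (S : seq int) : Prop :=
  forall c : int, exists2 x, x \in S & (x = c %[mod q])%Z.

Definition resclass (A : seq int) (q r : int) : seq int :=
  [seq x <- A | (q %| x - r)%Z].

(* given S contained in r + q.Z, the set S' with S = r + q . S' *)
Definition shrink (S : seq int) (q r : int) : seq int :=
  [seq ((x - r) %/ q)%Z | x <- S].

Definition gexc (k : nat) (lam : 'I_k -> int) (i : 'I_k) : int :=
  \big[gcdz/0]_(j < k | j != i) lam j.

Definition pprod (k : nat) (lam : 'I_k -> int) : int :=
  \prod_(i < k) gexc lam i.

From HB Require Import structures.
From mathcomp Require Import all_boot all_order all_algebra.
From mathcomp Require Import ring zify.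
From Stdlib Require Import Classical.
Set Implicit Arguments. Unset Strict Implicit. Unset Printing Implicit Defensive.
Import Order.TTheory GRing.Theory Num.Theory.
Local Open Scope ring_scope.

(* Write g_i for gexc lam i, p = g_1 ... g_k for pprod lam, P for the class
   of r mod p in A, P' = (P - r)/p, and A_i for the class of r mod g_i in A.
   Every g_i divides p, so P is contained in every A_i and the sumset
   lam_1.P + ... + lam_k.P lies inside lam_1.A_1 + ... + lam_k.A_k.
   If P' is not fully distributed mod g = g_i0, it misses a class c mod g.
   Writing p = g p1, full distribution of A'_i0 yields x0 in A_i0 whose
   reduced coordinate (x0 - r mod g)/g is r/g + p1 c mod g.  Fixing j1 <> i0
   and y0 in P, the sums
        lam_i0 x0 + lam_j1 y + sum_(i <> i0, j1) lam_i y0        (y in P)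
   are |P| distinct elements of the big sumset outside the small one:
   an equality with lam_1 f_1 + ... + lam_k f_k (f_i in P) gives, since
   g divides every lam_j (j <> i0) and is coprime to lam_i0, a congruence
   f_i0 = x0 mod g^2 (lemma lincomb_coord_dvd), which puts the coordinate of
   f_i0 in P' into the class c (lemma reduced_coord_dvd). *)

(* gcd is associative and commutative, so big gcds can be split (bigD1). *)
HB.instance Definition _ := SemiGroup.isComLaw.Build int gcdz gcdzA gcdzC.

Lemma dvdz_biggcd (k : nat) (P : pred 'I_k) (F : 'I_k -> int) (d : int) :
  (forall j, P j -> (d %| F j)%Z) -> (d %| \big[gcdz/0]_(j < k | P j) F j)%Z.
Proof.
move=> dF; apply: (big_ind (fun x => (d %| x)%Z)) => //.
by move=> x y dx dy; rewrite dvdz_gcd dx dy.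
Qed.

Lemma biggcd_dvdz (k : nat) (P : pred 'I_k) (F : 'I_k -> int) (j : 'I_k) :
  P j -> (\big[gcdz/0]_(i < k | P i) F i %| F j)%Z.
Proof. by move=> Pj; rewrite (bigD1 j) //= dvdz_gcdl. Qed.

Lemma exists_ord_neq (k : nat) (i : 'I_k) : (2 <= k)%N -> exists j : 'I_k, j != i.
Proof.
move=> k2; have lt_k : ((nat_of_ord i == 0%N) < k)%N by case: eqP; lia.
exists (Ordinal lt_k); apply/eqP => /(congr1 val) /=.
by case: eqP => [->|]; lia.
Qed.

Section ExcludedGcds.

Variables (k : nat) (lam : 'I_k -> int).

Lemma gexc_dvd (i j : 'I_k) : j != i -> (gexc lam i %| lam j)%Z.
Proof. exact: (@biggcd_dvdz k (fun l => l != i) lam j). Qed.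

Lemma gexc_neq0 (i j : 'I_k) : j != i -> lam j != 0 -> gexc lam i != 0.
Proof.
by move=> ji; apply: contra_neq => g0; apply/eqP; rewrite -dvd0z -g0 gexc_dvd.
Qed.

Lemma pprod_split (i : 'I_k) :
  pprod lam = gexc lam i * \prod_(j < k | j != i) gexc lam j.
Proof. by rewrite /pprod (bigD1 i). Qed.

Lemma gexc_dvd_pprod (i : 'I_k) : (gexc lam i %| pprod lam)%Z.
Proof. by rewrite (pprod_split i) dvdz_mulr. Qed.

Hypothesis hgcd : \big[gcdz/0]_(i < k) lam i = 1.

Lemma coprimez_dvd_lam (a b : int) :
  (forall l, (gcdz a b %| lam l)%Z) -> coprimez a b.
Proof.
move=> dlam; have : (gcdz a b %| \big[gcdz/0]_(i < k) lam i)%Z.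
  exact: dvdz_biggcd.
by rewrite hgcd dvdz1.
Qed.

Lemma coprime_gexc_lam (i : 'I_k) : coprimez (gexc lam i) (lam i).
Proof.
apply: coprimez_dvd_lam => l; have [-> | li] := eqVneq l i; first exact: dvdz_gcdr.
exact: dvdz_trans (dvdz_gcdl _ _) (gexc_dvd li).
Qed.

Lemma coprime_gexc (i j : 'I_k) : j != i -> coprimez (gexc lam i) (gexc lam j).
Proof.
move=> ji; apply: coprimez_dvd_lam => l; have [-> | lj] := eqVneq l j.
  exact: dvdz_trans (dvdz_gcdl _ _) (gexc_dvd ji).
exact: dvdz_trans (dvdz_gcdr _ _) (gexc_dvd lj).
Qed.

Lemma coprime_gexc_cofactor (i : 'I_k) :
  coprimez (gexc lam i) (\prod_(j < k | j != i) gexc lam j).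
Proof.
apply: (big_ind (coprimez (gexc lam i))) => [|a b ca cb|j ji].
- by rewrite /coprimez /gcdz gcdn1.
- by rewrite coprimezMr ca cb.
- exact: coprime_gexc.
Qed.

End ExcludedGcds.

Lemma resclass_dvd (A : seq int) (q r x y : int) :
  x \in resclass A q r -> y \in resclass A q r -> (q %| x - y)%Z.
Proof.
rewrite !mem_filter => /andP[qx _] /andP[qy _].
have -> : x - y = (x - r) - (y - r) by ring.
by rewrite rpredB.
Qed.

Lemma resclass_sub (A : seq int) (d q r : int) :
  (d %| q)%Z -> {subset resclass A q r <= resclass A d (r %% d)%Z}.
Proof.
move=> dq x; rewrite !mem_filter => /andP[qx ->]; rewrite andbT.
have -> : x - (r %% d)%Z = (x - r) + (r %/ d)%Z * d.
  by rewrite {2}(divz_eq r d); ring.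
by rewrite rpredD ?dvdz_mull ?(dvdz_trans dq qx).
Qed.

Lemma not_FD_class (q : int) (S : seq int) :
  ~ FD q S -> exists c, forall x, x \in S -> ~~ (q %| x - c)%Z.
Proof.
move=> notFD; apply: NNPP => noc; apply: notFD => c; apply: NNPP => noxc.
apply: noc; exists c => x xS; apply/negP => qxc; apply: noxc.
by exists x => //; apply/eqP; rewrite eqz_mod_dvd.
Qed.

Lemma mem_sumset (B C : seq int) (x : int) :
  x \in sumset B C <-> exists a b, [/\ a \in B, b \in C & x = a + b].
Proof.
split; first by case/allpairsP=> [[a b] [/= aB bC ->]]; exists a, b.
by case=> a [b [aB bC ->]]; apply/allpairsP; exists (a, b).
Qed.

Lemma mem_bigsum (k : nat) (F : 'I_k -> seq int) (x : int) :
  x \in bigsum F <-> exists f : 'I_k -> int,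
    (forall i, f i \in F i) /\ x = \sum_(i < k) f i.
Proof.
elim: k F x => [|k IH] F x.
  rewrite /bigsum big_ord0 inE; split; last by case=> f [_ ->]; rewrite big_ord0.
  by move/eqP->; exists (fun _ => 0); split; [case | rewrite big_ord0].
rewrite /bigsum big_ord_recl; split.
  case/mem_sumset=> a [b [aF0 /(IH (fun i => F (lift ord0 i)))[f [fF ->] ->]]].
  exists (fun i => if unlift ord0 i is Some j then f j else a); split.
    by move=> i; case: unliftP => [j ->|->].
  rewrite big_ord_recl unlift_none; congr (_ + _).
  by apply: eq_bigr => i _; rewrite liftK.
case=> f [fF ->]; rewrite big_ord_recl; apply/mem_sumset.
exists (f ord0), (\sum_(i < k) f (lift ord0 i)); split => //.
by apply/(IH (fun i => F (lift ord0 i))); exists (fun i => f (lift ord0 i)).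
Qed.

Lemma mem_bigsum_dil (k : nat) (lam : 'I_k -> int) (F : 'I_k -> seq int) (x : int) :
  x \in bigsum (fun i => dil (lam i) (F i)) <-> exists f : 'I_k -> int,
    (forall i, f i \in F i) /\ x = \sum_(i < k) lam i * f i.
Proof.
rewrite mem_bigsum; split=> [[g [gF ->]] | [f [fF ->]]].
  have [f fF] := fin_all_exists2 (fun i => mapP (gF i)).
  by exists f; split => //; apply: eq_bigr.
by exists (fun i => lam i * f i); split => // i; apply: map_f.
Qed.

Lemma bigsum_dil_sub (k : nat) (lam : 'I_k -> int) (F G : 'I_k -> seq int) :
  (forall i, {subset F i <= G i}) ->
  {subset bigsum (fun i => dil (lam i) (F i)) <= bigsum (fun i => dil (lam i) (G i))}.
Proof.
move=> FG x /mem_bigsum_dil[f [fF ->]]; apply/mem_bigsum_dil.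
by exists f; split => // i; apply: FG.
Qed.

Lemma cardZ_disjoint_sub (X B C : seq int) :
  {subset B <= X} -> {subset C <= X} -> (forall x, x \in B -> x \notin C) ->
  (cardZ B + cardZ C <= cardZ X)%N.
Proof.
move=> BX CX BC; rewrite /cardZ -size_cat; apply: uniq_leq_size.
  rewrite cat_uniq !undup_uniq andbT /=; apply/hasPn => x; rewrite !mem_undup.
  by move=> xC; apply/negP => /BC; rewrite xC.
by move=> x; rewrite mem_cat !mem_undup => /orP[/BX | /CX].
Qed.

Lemma cardZ_map_inj (h : int -> int) (S : seq int) :
  injective h -> cardZ (map h S) = cardZ S.
Proof. by move=> h_inj; rewrite /cardZ undup_map_inj // size_map. Qed.

Lemma lincomb_coord_dvd (k : nat) (lam f f' : 'I_k -> int) (i0 : 'I_k) (d e : int) :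
  \sum_(i < k) lam i * f i = \sum_(i < k) lam i * f' i ->
  (forall j, j != i0 -> (d %| lam j)%Z) ->
  (forall j, j != i0 -> (e %| f j - f' j)%Z) ->
  coprimez (d * e) (lam i0) ->
  (d * e %| f i0 - f' i0)%Z.
Proof.
move=> eq_sum d_lam e_f cop; rewrite -(Gauss_dvdzr _ cop).
have /eqP : \sum_(i < k) lam i * (f i - f' i) = 0.
  by rewrite (eq_bigr _ (fun i _ => mulrBr _ _ _)) sumrB eq_sum subrr.
rewrite (bigD1 i0) //= addr_eq0 => /eqP ->; rewrite rpredN.
by apply: rpred_sum => j ji0; apply: dvdz_mul; [apply: d_lam | apply: e_f].
Qed.

Lemma reduced_coord_dvd (g p1 r x x0 c : int) :
  g != 0 -> coprimez g p1 ->
  (g * p1 %| x - r)%Z -> (g %| x0 - (r %% g)%Z)%Z ->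
  (g %| ((x0 - (r %% g)%Z) %/ g)%Z - ((r %/ g)%Z + p1 * c))%Z ->
  (g * g %| x - x0)%Z ->
  (g %| ((x - r) %/ (g * p1))%Z - c)%Z.
Proof.
move=> g0 cop /divzK ex /divzK ex0 t_cls.
set q := ((x - r) %/ (g * p1))%Z in ex *; set t := ((x0 - _) %/ g)%Z in ex0 t_cls *.
have -> : x - x0 = g * (q * p1 + (r %/ g)%Z - t).
  rewrite -[x](subrK r) -[x0](subrK (r %% g)%Z) -ex -ex0.
  by rewrite {1}(divz_eq r g); ring.
rewrite dvdz_mul2l // => q_cls; rewrite -(Gauss_dvdzr _ cop).
have -> : p1 * (q - c) = (q * p1 + (r %/ g)%Z - t) + (t - ((r %/ g)%Z + p1 * c)).
  by ring.
by rewrite rpredD.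
Qed.

Section ExtraSums.

Variables (k : nat) (lam : 'I_k -> int) (A : seq int) (r : int).
Hypothesis hnz : forall i, lam i != 0.
Hypothesis hgcd : \big[gcdz/0]_(i < k) lam i = 1.

Let P := resclass A (pprod lam) r.
Let Acl (i : 'I_k) := resclass A (gexc lam i) (r %% gexc lam i)%Z.

Lemma P_sub_Acl (i : 'I_k) : {subset P <= Acl i}.
Proof. exact/resclass_sub/gexc_dvd_pprod. Qed.

Variables (i0 j1 : 'I_k) (x0 y0 : int).
Hypotheses (j1i0 : j1 != i0) (x0A : x0 \in Acl i0) (y0P : y0 \in P).

Definition extra_choice (y : int) (i : 'I_k) : int :=
  if i == i0 then x0 else if i == j1 then y else y0.

Definition extra_sum (y : int) : int := \sum_(i < k) lam i * extra_choice y i.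

Lemma extra_choice_P (y : int) (i : 'I_k) :
  y \in P -> i != i0 -> extra_choice y i \in P.
Proof. by move=> yP /negbTE ii0; rewrite /extra_choice ii0; case: ifP. Qed.

(* The coordinate j1 is free and lam_j1 <> 0, so y is recovered. *)
Lemma extra_sum_inj : injective extra_sum.
Proof.
move=> y1 y2; rewrite /extra_sum (bigD1 j1) //= [in RHS](bigD1 j1) //=.
under [in RHS]eq_bigr => i /negbTE ij1 do rewrite /extra_choice ij1.
under eq_bigr => i /negbTE ij1 do rewrite /extra_choice ij1.
by rewrite /extra_choice (negbTE j1i0) eqxx => /addIr; apply: mulfI.
Qed.

Lemma extra_sum_mem (y : int) :
  y \in P -> extra_sum y \in bigsum (fun i => dil (lam i) (Acl i)).
Proof.
move=> yP; apply/mem_bigsum_dil; exists (extra_choice y); split => // i.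
have [-> | ii0] := eqVneq i i0; first by rewrite /extra_choice eqxx.
exact/P_sub_Acl/extra_choice_P.
Qed.

Let g := gexc lam i0.
Let p1 := \prod_(j < k | j != i0) gexc lam j.

Variable c : int.
Hypothesis P'_miss : forall q, q \in shrink P (pprod lam) r -> ~~ (g %| q - c)%Z.
Hypothesis x0_cls : (g %| ((x0 - (r %% g)%Z) %/ g)%Z - ((r %/ g)%Z + p1 * c))%Z.

Lemma extra_sum_notin (y : int) :
  y \in P -> extra_sum y \notin bigsum (fun i => dil (lam i) P).
Proof.
move=> yP; apply/negP => /mem_bigsum_dil[f [fP sum_eq]].
have g0 : g != 0 := gexc_neq0 j1i0 (hnz j1).
have f_x0 : (g * g %| f i0 - x0)%Z.
  have -> : x0 = extra_choice y i0 by rewrite /extra_choice eqxx.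
  apply: (lincomb_coord_dvd (esym sum_eq)) => [j | j ji0 | ].
  - exact: gexc_dvd.
  - apply: dvdz_trans (gexc_dvd_pprod lam i0) _.
    exact: resclass_dvd (fP j) (extra_choice_P yP ji0).
  - by rewrite coprimezMl coprime_gexc_lam.
have fP0 : (g * p1 %| f i0 - r)%Z.
  by rewrite -pprod_split; move: (fP i0); rewrite mem_filter => /andP[].
have x0g : (g %| x0 - (r %% g)%Z)%Z by move: x0A; rewrite mem_filter => /andP[].
have := reduced_coord_dvd g0 (coprime_gexc_cofactor hgcd i0) fP0 x0g x0_cls f_x0.
by rewrite -pprod_split; apply/negP/P'_miss/map_f.
Qed.

Lemma card_extra_sums :
  (cardZ (bigsum (fun i => dil (lam i) P)) + cardZ P
     <= cardZ (bigsum (fun i => dil (lam i) (Acl i))))%N.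
Proof.
rewrite -(cardZ_map_inj P extra_sum_inj) addnC; apply: cardZ_disjoint_sub.
- by move=> _ /mapP[y yP ->]; apply: extra_sum_mem.
- by apply: bigsum_dil_sub => i; apply: P_sub_Acl.
- by move=> _ /mapP[y yP ->]; apply: extra_sum_notin.
Qed.

End ExtraSums.

Theorem mainTheorem4 (k : nat) (lam : 'I_k -> int) (A : seq int) (r : int)
  (hk : (2 <= k)%N)
  (hnz : forall i, lam i != 0)
  (hgcd : \big[gcdz/0]_(i < k) lam i = 1)
  (hr : 0 <= r < pprod lam)
  (hP : resclass A (pprod lam) r != [::])
  (hFD : forall i : 'I_k,
     FD (gexc lam i)
        (shrink (resclass A (gexc lam i) (r %% gexc lam i)%Z)
                (gexc lam i) (r %% gexc lam i)%Z)) :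
  (forall i : 'I_k,
     FD (gexc lam i) (shrink (resclass A (pprod lam) r) (pprod lam) r))
  \/
  (cardZ (bigsum (fun i => dil (lam i)
           (resclass A (gexc lam i) (r %% gexc lam i)%Z)))
   >= cardZ (bigsum (fun i => dil (lam i) (resclass A (pprod lam) r)))
      + cardZ (resclass A (pprod lam) r))%N.
Proof.
set P := resclass A (pprod lam) r in hP *.
have [y0 y0P] : exists y0, y0 \in P.
  by case: P hP => // y0 s _; exists y0; rewrite mem_head.
have [allFD | /not_all_ex_not[i0 /not_FD_class[c P'_miss]]] :=
  classic (forall i, FD (gexc lam i) (shrink P (pprod lam) r)); [by left | right].
have [j1 j1i0] := exists_ord_neq i0 hk.
(* a point x0 of A_i0 whose reduced coordinate is r/g + p1 c mod g *)
pose p1 := \prod_(j < k | j != i0) gexc lam j.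
have [_ /mapP[x0 x0A ->] /eqP x0_cls] := hFD i0 ((r %/ gexc lam i0)%Z + p1 * c).
rewrite eqz_mod_dvd in x0_cls.
exact: (card_extra_sums hnz hgcd j1i0 x0A y0P P'_miss x0_cls).
Qed.
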